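(* For every graph $G$ of order $n$, $\gamma_{rdR}(G)\le n+\gamma(G)$. This bound is sharp: for every graph $H$ with no isolated vertices, the graph $H'$ obtained from $H$ by attaching two new pendant vertices to each vertex of $H$ satisfies $\gamma_{rdR}(H')=|V(H')|+\gamma(H')$.
   Context: All graphs are finite and simple. An RDRD function of $G$ is a function $f:V(G)\to\{0,1,2,3\}$ such that every vertex with value $0$ has at least two neighbors with value $2$ or at least one neighbor with value $3$, every vertex with value $1$ has a neighbor with value $2$ or $3$, and the subgraph induced by the vertices with value $0$ has no isolated vertices; $\gamma_{rdR}(G)$ is the minimum of $\sum_v f(v)$ over RDRD functions. $\gamma(G)$ denotes the domination number. *)

From mathcomp Require Import all_boot.
Set Implicit Arguments. Unset Strict Implicit. Unset Printing Implicit Defensive.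

(* A finite simple graph: vertex type T : finType with adjacency e : rel T,
   assumed symmetric and irreflexive (hypotheses in the theorem). *)

Section Graph.
Variables (T : finType) (e : rel T).

Definition dominating (D : {set T}) : bool :=
  [forall v, (v \in D) || [exists u, e v u && (u \in D)]].

(* domination number gamma(G); setT always dominates so the default is harmless *)
Definition gamma : nat :=
  \big[minn/#|T|]_(D : {set T} | dominating D) #|D|.

Definition is_RDRD (f : {ffun T -> 'I_4}) : bool :=
  [forall v,
    ((nat_of_ord (f v) == 0) ==>
       ((1 < #|[set u | e v u && (nat_of_ord (f u) == 2)]|)
        || [exists u, e v u && (nat_of_ord (f u) == 3)]))
    && ((nat_of_ord (f v) == 1) ==> [exists u, e v u && (2 <= f u)])
    && ((nat_of_ord (f v) == 0) ==> [exists u, e v u && (nat_of_ord (f u) == 0)])].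

Definition weight (f : {ffun T -> 'I_4}) : nat := \sum_(v : T) nat_of_ord (f v).

(* gamma_rdR(G); the constant-3 function is always RDRD, so the default 3n is harmless *)
Definition gamma_rdR : nat :=
  \big[minn/(3 * #|T|)]_(f : {ffun T -> 'I_4} | is_RDRD f) weight f.

End Graph.

Definition pendant2 (T : finType) (e : rel T) : rel (T + (T * bool))%type :=
  fun a b =>
    match a, b with
    | inl x, inl y => e x y
    | inl x, inr (y, _) => x == y
    | inr (x, _), inl y => x == y
    | inr _, inr _ => false
    end.

From mathcomp Require Import all_boot.
From mathcomp Require Import zify.

(* Upper bound: for a dominating set D, labelling D by 2 and every other
   vertex by 1 is an RDRD function (no vertex gets 0, every 1 sees a 2), of
   weight n + |D|; minimising over D gives n + gamma(G).

   Sharpness: in H' (with |V(H)| = m, so |V(H')| = 3m) every pendant vertex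
   has its support as unique neighbour, hence it cannot get 0, and if it gets
   1 its support gets at least 2.  So each vertex of H together with its two
   pendants carries weight >= 4, and every RDRD function of H' weighs >= 4m.
   Since V(H) dominates H', gamma(H') <= m, and the upper bound gives
   4m <= gamma_rdR(H') <= 3m + gamma(H') <= 4m, forcing equality. *)

Section BigMin.
Variables (I : finType) (P : pred I) (F : I -> nat) (d : nat).

Lemma bigmin_leq i : P i -> \big[minn/d]_(j | P j) F j <= F i.
Proof.
move=> Pi; have : i \in index_enum I by rewrite mem_index_enum.
elim: (index_enum I) => [|j r IH] //; rewrite inE big_cons.
case/predU1P => [<- | ir]; first by rewrite Pi geq_minl.
by case: (P j); [apply: leq_trans (geq_minr _ _) (IH ir) | apply: IH].
Qed.

Lemma bigmin_geq m :
  m <= d -> (forall i, P i -> m <= F i) -> m <= \big[minn/d]_(j | P j) F j.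
Proof.
move=> md mF; elim/big_ind: _ => // x y mx my.
by rewrite leq_min mx my.
Qed.

End BigMin.

Section UpperBound.
Variables (T : finType) (e : rel T).

Definition dominating_labelling (D : {set T}) : {ffun T -> 'I_4} :=
  [ffun v => if v \in D then (@Ordinal 4 2 isT) else (@Ordinal 4 1 isT)].

(* It is an RDRD function as soon as D dominates: no vertex is labelled 0,
   and a vertex labelled 1 lies outside D, so it has a neighbour in D. *)
Lemma dominating_labelling_RDRD D :
  dominating e D -> is_RDRD e (dominating_labelling D).
Proof.
move=> /forallP domD; apply/forallP => v; rewrite ffunE.
case: ifP => vD //=; rewrite andbT.
have /existsP [u /andP [evu uD]] : [exists u, e v u && (u \in D)].
  by have := domD v; rewrite vD.
by apply/existsP; exists u; rewrite evu ffunE uD.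
Qed.

Lemma weight_dominating_labelling D :
  weight (dominating_labelling D) = #|T| + #|D|.
Proof.
rewrite /weight (eq_bigr (fun v => 1 + (v \in D))); last first.
  by move=> v _; rewrite ffunE; case: (v \in D).
by rewrite big_split /= sum1_card -big_mkcond /= sum1_card.
Qed.

Lemma gamma_rdR_le_dominating D :
  dominating e D -> gamma_rdR e <= #|T| + #|D|.
Proof.
move=> domD; rewrite -weight_dominating_labelling.
exact/bigmin_leq/dominating_labelling_RDRD.
Qed.

(* The upper bound; the default #|T| of gamma is the cardinality of the
   dominating set setT, so it is covered as well. *)
Lemma gamma_rdR_upper : gamma_rdR e <= #|T| + gamma e.
Proof.
rewrite /gamma; elim/big_ind: _ => [||D]; last exact: gamma_rdR_le_dominating.
- rewrite -[X in _ + X]cardsT; apply: gamma_rdR_le_dominating.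
  by apply/forallP => v; rewrite in_setT.
- by move=> x y hx hy; rewrite /minn; case: ifP.
Qed.

End UpperBound.

Section PendantGraph.
Variables (T : finType) (e : rel T).

Local Notation V := (T + (T * bool))%type.
Local Notation H' := (pendant2 e).

Lemma card_pendant2 : #|{: V}| = 3 * #|T|.
Proof. by rewrite card_sum card_prod card_bool; lia. Qed.

Lemma pendant_neighbour x b u : H' (inr (x, b)) u -> u = inl x.
Proof. by case: u => [y | [y c]] //= /eqP ->. Qed.

Lemma pendant_nbhd_card x b (A : pred V) :
  #|[set u | H' (inr (x, b)) u && A u]| <= 1.
Proof.
rewrite -(cards1 (inl x : V)); apply: subset_leq_card.
by apply/subsetP => u; rewrite !inE => /andP [/pendant_neighbour -> _].
Qed.

(* A pendant vertex is never labelled 0: its only neighbour would need label 0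
   (restraint) and label 3 (a single neighbour cannot provide two 2s). *)
Lemma pendant_positive f x b :
  is_RDRD H' f -> 0 < f (inr (x, b)).
Proof.
move=> /forallP /(_ (inr (x, b))) /andP [/andP [dbl _] restr].
rewrite lt0n; apply/negP => f0.
move: (implyP dbl f0) (implyP restr f0) => {dbl restr}; move/eqP: f0 => f0.
case/orP => [two | /existsP [w /andP [/pendant_neighbour -> /eqP f3]]];
  case/existsP => u /andP [/pendant_neighbour -> /eqP fu0].
- by move: two; rewrite ltnNge pendant_nbhd_card.
- by rewrite f3 in fu0.
Qed.

Lemma pendant_one_support f x b :
  is_RDRD H' f -> nat_of_ord (f (inr (x, b))) = 1 -> 2 <= f (inl x).
Proof.
move=> /forallP /(_ (inr (x, b))) /andP [/andP [_ one] _] f1.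
move: one; rewrite f1 /= => /existsP [u /andP [/pendant_neighbour -> //]].
Qed.

Lemma star_weight f x :
  is_RDRD H' f -> 4 <= f (inl x) + f (inr (x, false)) + f (inr (x, true)).
Proof.
move=> fR.
have := pendant_positive f x false fR; have := pendant_one_support f x false fR.
have := pendant_positive f x true fR; have := pendant_one_support f x true fR.
case: (f (inl x)) => [p ?]; case: (f (inr (x, false))) => [q ?];
case: (f (inr (x, true))) => [r ?] /=; lia.
Qed.

Lemma weight_pendant_lower f : is_RDRD H' f -> 4 * #|T| <= weight f.
Proof.
move=> fR; rewrite /weight big_sumType /=.
have -> : \sum_(p : T * bool) nat_of_ord (f (inr p)) =
          \sum_(x : T) \sum_(b : bool) nat_of_ord (f (inr (x, b))).
  by rewrite pair_big /=; apply: eq_bigr => -[x b] _.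
rewrite -big_split /=.
rewrite -sum1_card big_distrr /=; apply: leq_sum => x _.
by rewrite big_bool /= muln1 addnA addnAC star_weight.
Qed.

(* The minimum also respects the bound, its default 3 * |V(H')| being >= 4m. *)
Lemma gamma_rdR_pendant_lower : 4 * #|T| <= gamma_rdR H'.
Proof.
apply: bigmin_geq; last exact: weight_pendant_lower.
by rewrite card_pendant2; lia.
Qed.

Lemma gamma_pendant_upper : gamma H' <= #|T|.
Proof.
pose D : {set V} := [set inl x | x in T].
have domD : dominating H' D.
  apply/forallP => -[y | [y c]]; first by rewrite imset_f.
  by apply/orP; right; apply/existsP; exists (inl y); rewrite /= eqxx imset_f.
have <- : #|D| = #|T| by rewrite card_imset // => a c [].
exact: bigmin_leq.
Qed.

End PendantGraph.

Theorem proposition2p5 :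
  (forall (T : finType) (e : rel T), symmetric e -> irreflexive e ->
     gamma_rdR e <= #|T| + gamma e)
  /\
  (forall (T : finType) (e : rel T), symmetric e -> irreflexive e ->
     (forall x : T, exists y, e x y) ->
     gamma_rdR (pendant2 e) = #|((T + (T * bool))%type : finType)| + gamma (pendant2 e)).
Proof.
split=> [T e _ _ | T e _ _ _]; first exact: gamma_rdR_upper.
have upper := @gamma_rdR_upper _ (pendant2 e).
have lower := @gamma_rdR_pendant_lower T e.
have gamma_le := @gamma_pendant_upper T e.
move: upper; rewrite card_pendant2 => upper; lia.
Qed.
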